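(* Let $L$ be an atomic orthomodular lattice and let $V\in\mathcal{B}(L)$ be a $2$-dimensional Boolean subalgebra, with generating family $\mathcal{F}_V=\{P,P^{\perp}\}$. Then: (i) if $V$ is maximal in $\mathcal{B}(L)$, then $P$ and $P^{\perp}$ are (complementary) atoms of $L$; (ii) if $V$ is included in a $3$-dimensional $W\in\mathcal{B}(L)$ that is maximal in $\mathcal{B}(L)$, then one of $P,P^{\perp}$ is an atom of $L$ and the other is the join of two atoms of $L$; moreover, $W$ contains precisely two $2$-dimensional elements of $\mathcal{B}(L)$ other than $V$; (iii) if $V$ is neither maximal in $\mathcal{B}(L)$ nor included in a $3$-dimensional element of $\mathcal{B}(L)$ that is maximal in $\mathcal{B}(L)$, then one of $P,P^{\perp}$ is an atom of $L$ if and only if every $4$-dimensional $W\in\mathcal{B}(L)$ with $V\subseteq W$ contains precisely three $3$-dimensional elements $V_1,V_2,V_3\in\mathcal{B}(L)$ with $V\subset V_i$ for $i=1,2,3$.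
   Context: $L$ is a lattice with least element $0$, greatest element $1$ and an orthocomplementation $P\mapsto P^{\perp}$, which is orthomodular and atomic (every nonzero element lies above an atom, i.e. a minimal nonzero element). Elements $P,Q$ are orthogonal if $P\le Q^{\perp}$. A Boolean subalgebra (BSA) $V$ of $L$ is said to be generated by a family $\mathcal{F}$ of nonzero pairwise orthogonal elements of $L$ with join $1$ if the elements of $\mathcal{F}$ are the atoms of $V$ and every element of $V$ is a join of elements of $\mathcal{F}$; this family is denoted $\mathcal{F}_V$. $\mathcal{B}(L)$ denotes the set of those BSAs of $L$ that are generated by some such family, partially ordered by inclusion (only such BSAs are considered). The dimension of $V\in\mathcal{B}(L)$ is the cardinality of $\mathcal{F}_V$. ''Maximal'' means maximal in the poset $\mathcal{B}(L)$. *)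

From mathcomp Require Import all_boot all_order.
Set Implicit Arguments. Unset Strict Implicit. Unset Printing Implicit Defensive.
Import Order.TTheory.
Local Open Scope order_scope.

Section OML.
Context {d : Order.disp_t} {L : tbLatticeType d} (perp : L -> L).

Definition orthomodular : Prop :=
  [/\ (forall x y : L, x <= y -> perp y <= perp x),
      (forall x : L, perp (perp x) = x),
      (forall x : L, x `&` perp x = \bot),
      (forall x : L, x `|` perp x = \top)
    & (forall x y : L, x <= y -> y = x `|` (y `&` perp x))].

Definition atom (a : L) : Prop :=
  a != \bot /\ forall b : L, b <= a -> b = \bot \/ b = a.

Definition atomic : Prop :=
  forall x : L, x != \bot -> exists a, atom a /\ a <= x.

Definition orthogonal (x y : L) : Prop := x <= perp y.

Definition pincl (V W : L -> Prop) : Prop := forall x, V x -> W x.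
Definition peq (V W : L -> Prop) : Prop := forall x, V x <-> W x.

Definition is_sup (S : L -> Prop) (x : L) : Prop :=
  (forall s, S s -> s <= x) /\
  (forall y, (forall s, S s -> s <= y) -> x <= y).

Definition BSA (V : L -> Prop) : Prop :=
  [/\ V \bot, V \top,
      (forall x, V x -> V (perp x)),
      (forall x y, V x -> V y -> V (x `&` y) /\ V (x `|` y))
    & (forall x y z, V x -> V y -> V z ->
         x `&` (y `|` z) = (x `&` y) `|` (x `&` z))].

Definition atom_of (V : L -> Prop) (a : L) : Prop :=
  [/\ V a, a != \bot & forall b, V b -> b <= a -> b = \bot \/ b = a].

Definition generated_by (V F : L -> Prop) : Prop :=
  BSA V /\
  [/\ (forall x, F x -> x != \bot),
      (forall x y, F x -> F y -> x <> y -> orthogonal x y),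
      is_sup F \top,
      (forall x, F x <-> atom_of V x)
    & (forall v, V v -> exists G, pincl G F /\ is_sup G v)].

Definition inB (V : L -> Prop) : Prop := exists F, generated_by V F.

Definition has_dim (V : L -> Prop) (n : nat) : Prop :=
  exists F, generated_by V F /\
    exists f : 'I_n -> L, injective f /\ (forall x, F x <-> exists i, f i = x).

Definition maximalB (V : L -> Prop) : Prop :=
  inB V /\ forall W, inB W -> pincl V W -> pincl W V.

End OML.

(* For an orthogonal partition of unity f (finitely many nonzero, pairwise
   orthogonal elements with join 1), S |-> \join_(i in S) f i is an
   injective Boolean homomorphism from subsets of indices into L, so every
   finite-dimensional element of B(L) is the image of a powerset and its atoms
   are the blocks f i.  Splitting a block f k along some 0 < b < f k gives a
   strictly larger element of B(L); hence all blocks of a maximal element are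
   atoms of L.  This gives (i), and in (ii) P or its complement is a block of
   the maximal 3-dimensional W, the other one being the join of the two
   remaining blocks; the 2-dimensional subalgebras of W are the three
   {0, g, g^perp, 1} with g a block of W.
   For (iii), a 3-dimensional U containing P has blocks p, x, p^perp /\ x^perp
   with p = P or p = P^perp.  Inside a 4-dimensional W the elements x and
   p^perp /\ x^perp split the at most three blocks of W below p^perp, so one of
   them is a block of W.  If P is an atom it is a block of W, and the three
   other blocks give exactly three such U; if neither P nor P^perp is an atom,
   refining both once gives a 4-dimensional W over V admitting only two. *)

From mathcomp Require Import all_boot all_order.
From mathcomp Require Import boolp.
From mathcomp Require Import zify.
Set Implicit Arguments. Unset Strict Implicit. Unset Printing Implicit Defensive.
Import Order.TTheory.
Local Open Scope order_scope.

Lemma card3_set (T : finType) (A : {set T}) : #|A| = 3 ->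
  exists x y z, [/\ x != y, x != z, y != z & A = [set x; y; z]].
Proof.
move=> A3; have [x xA] : exists x, x \in A by apply/card_gt0P; rewrite A3.
have /cards2P[y [z [yz Ax]]] : #|A :\ x| == 2 by move: (cardsD1 x A); rewrite xA A3; lia.
have : y \in A :\ x by rewrite Ax !inE eqxx.
have : z \in A :\ x by rewrite Ax !inE eqxx orbT.
rewrite !inE => /andP[zx _] /andP[yx _]; exists x, y, z.
by split; rewrite // 1?eq_sym // -setUA -Ax setD1K.
Qed.

Lemma card3_setC1 (T : finType) (k : T) : #|T| = 3 -> exists k1 k2,
  [/\ k1 != k2, k1 != k, k2 != k & ~: [set k] = [set k1; k2]].
Proof.
move=> T3; have /cards2P[k1 [k2 [k12 Ck]]] : #|~: [set k]| == 2 by rewrite cardsC1 T3.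
have : k1 \in ~: [set k] by rewrite Ck !inE eqxx.
have : k2 \in ~: [set k] by rewrite Ck !inE eqxx orbT.
by rewrite !inE => k2k k1k; exists k1, k2.
Qed.

Section OrthomodularLattice.
Context {d : Order.disp_t} {L : tbLatticeType d} (perp : L -> L).
Hypothesis omlL : orthomodular perp.

Lemma perp_anti x y : x <= y -> perp y <= perp x.
Proof. by case: omlL => h _ _ _ _; apply: h. Qed.

Lemma perpK : involutive perp.
Proof. by case: omlL. Qed.

Lemma meet_perp x : x `&` perp x = \bot.
Proof. by case: omlL => _ _ h _ _; apply: h. Qed.

Lemma join_perp x : x `|` perp x = \top.
Proof. by case: omlL => _ _ _ h _; apply: h. Qed.

Lemma oml_decomp x y : x <= y -> y = x `|` (y `&` perp x).
Proof. by case: omlL => _ _ _ _ h; apply: h. Qed.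

Lemma le_perp x y : (perp x <= perp y) = (y <= x).
Proof. by apply/idP/idP => [/perp_anti|/perp_anti //]; rewrite !perpK. Qed.

Lemma le_perpC x y : x <= perp y -> y <= perp x.
Proof. by rewrite -le_perp perpK. Qed.

Lemma perpU x y : perp (x `|` y) = perp x `&` perp y.
Proof.
apply/le_anti; rewrite lexI !perp_anti ?leUl ?leUr //=.
by apply: le_perpC; rewrite leUx; apply/andP; split; apply: le_perpC;
  [exact: leIl | exact: leIr].
Qed.

Lemma perpI x y : perp (x `&` y) = perp x `|` perp y.
Proof. by rewrite -[x in LHS]perpK -[y in LHS]perpK -perpU perpK. Qed.

Lemma perp0 : perp \bot = \top.
Proof. by rewrite -(join_perp \bot) join0x. Qed.

Lemma perp1 : perp \top = \bot.
Proof. by rewrite -perp0 perpK. Qed.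

Lemma perp_eq0 x : (perp x == \bot) = (x == \top).
Proof. by rewrite -perp1 (inj_eq (can_inj perpK)). Qed.

Lemma perp_eq1 x : (perp x == \top) = (x == \bot).
Proof. by rewrite -perp_eq0 perpK. Qed.

Lemma le_perp_eq0 x y : x <= y -> x <= perp y -> x = \bot.
Proof. by move=> xy xy'; apply/eqP; rewrite -lex0 -(meet_perp y) lexI xy. Qed.

Lemma perp_unique x y : x <= perp y -> x `|` y = \top -> x = perp y.
Proof.
by move=> xy xy1; rewrite [RHS](oml_decomp xy) -perpU [y `|` x]joinC xy1 perp1 joinx0.
Qed.

Lemma not_atom (x : L) : x != \bot -> ~ atom x ->
  exists b, [/\ b <= x, b != \bot & b != x].
Proof.
move=> x0 xNatom; apply: contrapT => noB; apply: xNatom; split=> // b bx.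
apply: contrapT => /not_orP[/eqP b0 /eqP bx']; by apply: noB; exists b.
Qed.

Lemma rel_compl_unique a b c : a <= perp c -> a `|` c = b -> c = b `&` perp a.
Proof.
move=> ac acb; have cb : c <= b `&` perp a by rewrite lexI -acb leUr le_perpC.
rewrite [RHS](oml_decomp cb); have -> : b `&` perp a `&` perp c = \bot.
  by apply/eqP; rewrite -lex0 -(meet_perp (a `|` c)) perpU acb meetA.
by rewrite joinx0.
Qed.

Lemma meet_perp_neq0 (b x : L) : b <= x -> b != x -> x `&` perp b != \bot.
Proof. by move=> bx; apply: contraNneq => e; rewrite [x](oml_decomp bx) e joinx0. Qed.


(** * Orthogonal partitions of unity *)

Section OrthoPartition.
Variables (I : finType) (f : I -> L).

Definition ortho_partition := [/\ forall i, f i != \bot,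
  forall i j, i != j -> f i <= perp (f j) & \join_i f i = \top].

Definition sjoin (S : {set I}) := \join_(i in S) f i.

Definition bsa_of (x : L) : Prop := exists S, x = sjoin S.

Definition range (x : L) : Prop := exists i, f i = x.

Hypothesis partf : ortho_partition.
Implicit Types S T : {set I}.

Lemma partition_neq0 i : f i != \bot.
Proof. by case: partf. Qed.

Lemma partition_orth i j : i != j -> f i <= perp (f j).
Proof. by case: partf => _ h _; apply: h. Qed.

Lemma partition_inj : injective f.
Proof.
move=> i j fij; apply: contraTeq (partition_neq0 i) => ij; rewrite negbK.
apply/eqP; apply: (le_perp_eq0 (le_refl _)).
by rewrite [X in perp X]fij partition_orth.
Qed.

Lemma sjoin0 : sjoin set0 = \bot.
Proof. exact: big_set0. Qed.

Lemma sjoin1 i : sjoin [set i] = f i.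
Proof. exact: big_set1. Qed.

Lemma sjoinT : sjoin setT = \top.
Proof. by case: partf => _ _ <-; apply: eq_bigl => i; rewrite inE. Qed.

Lemma sjoinU S T : sjoin (S :|: T) = sjoin S `|` sjoin T.
Proof. exact: joins_setU. Qed.

Lemma le_sjoin i S : i \in S -> f i <= sjoin S.
Proof. exact: joins_sup. Qed.

Lemma sjoin_orth S T : [disjoint S & T] -> sjoin S <= perp (sjoin T).
Proof.
move=> ST; apply/joinsP => i iS; apply: le_perpC; apply/joinsP => j jT.
by apply: partition_orth; apply: contraTneq jT => ->; rewrite (disjointFr ST).
Qed.

Lemma sjoinC S : perp (sjoin S) = sjoin (~: S).
Proof.
apply/esym/perp_unique; last by rewrite -sjoinU setUC setUCr sjoinT.
by apply: sjoin_orth; rewrite disjoint_sym disjoints_subset setCK.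
Qed.

Lemma sjoinI S T : sjoin (S :&: T) = sjoin S `&` sjoin T.
Proof. by rewrite -[LHS]perpK sjoinC setCI sjoinU -!sjoinC perpU !perpK. Qed.

Lemma sjoin_subset S T : (sjoin S <= sjoin T) = (S \subset T).
Proof.
apply/idP/idP => [ST|]; last exact: le_joins.
apply/subsetP => i iS; apply: contraTT (partition_neq0 i) => iT; rewrite negbK.
apply/eqP; apply: (le_perp_eq0 (le_trans (le_sjoin iS) ST)).
by rewrite sjoinC le_sjoin // inE.
Qed.

Lemma sjoin_inj : injective sjoin.
Proof. by move=> S T ST; apply/eqP; rewrite eqEsubset -!sjoin_subset ST lexx. Qed.

Lemma sjoin_eq0 S : (sjoin S == \bot) = (S == set0).
Proof. by rewrite -sjoin0 (inj_eq sjoin_inj). Qed.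

Lemma bsa_of_BSA : BSA perp bsa_of.
Proof.
split.
- by exists set0; rewrite sjoin0.
- by exists setT; rewrite sjoinT.
- by move=> _ [S ->]; exists (~: S); rewrite sjoinC.
- by move=> _ _ [S ->] [T ->]; split; [exists (S :&: T); rewrite sjoinI
                                      | exists (S :|: T); rewrite sjoinU].
- by move=> _ _ _ [S ->] [T ->] [U ->]; rewrite -sjoinU -!sjoinI -sjoinU setIUr.
Qed.

Lemma bsa_of_f i : bsa_of (f i).
Proof. by exists [set i]; rewrite sjoin1. Qed.

Lemma atom_of_bsa_of x : atom_of bsa_of x <-> range x.
Proof.
split=> [[[S ->] S0 minS]|[i <-]].
  have [i iS] : exists i, i \in S by apply/set0Pn; rewrite -sjoin_eq0.
  case: (minS _ (bsa_of_f i) (le_sjoin iS)) => [fi0|<-]; last by exists i.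
  by move: (partition_neq0 i); rewrite fi0 eqxx.
split; [exact: bsa_of_f | exact: partition_neq0 |] => _ [S ->].
rewrite -sjoin1 sjoin_subset subset1 => /orP[/eqP->|/eqP->]; first by right.
by left; rewrite sjoin0.
Qed.

Lemma generated_by_bsa_of : generated_by perp bsa_of range.
Proof.
split; first exact: bsa_of_BSA.
split.
- by move=> _ [i <-]; exact: partition_neq0.
- move=> _ _ [i <-] [j <-] fij; apply: partition_orth.
  by apply/eqP => ij; apply: fij; rewrite ij.
- split=> [s _|y ub]; first exact: lex1.
  by rewrite -sjoinT; apply/joinsP => i _; apply: ub; exists i.
- by move=> x; rewrite atom_of_bsa_of.
- move=> _ [S ->]; exists (fun y => exists2 i, i \in S & f i = y).
  split=> [_ [i _ <-]|]; first by exists i.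
  split=> [_ [i iS <-]|y ub]; first exact: le_sjoin.
  by apply/joinsP => i iS; apply: ub; exists i.
Qed.

End OrthoPartition.

Lemma peq_refl (V : L -> Prop) : peq V V.
Proof. by []. Qed.

Lemma peq_sym (V W : L -> Prop) : peq V W -> peq W V.
Proof. by move=> VW x; rewrite VW. Qed.

Lemma peq_trans (U V W : L -> Prop) : peq U V -> peq V W -> peq U W.
Proof. by move=> UV VW x; rewrite UV VW. Qed.

Lemma peq_pigeonhole (A B U1 U2 U3 : L -> Prop) :
  (forall U, U = U1 \/ U = U2 \/ U = U3 -> peq U A \/ peq U B) ->
  [\/ peq U1 U2, peq U1 U3 | peq U2 U3].
Proof.
move=> AB; have [e1|e1] := AB U1 (or_introl erefl);
have [e2|e2] := AB U2 (or_intror (or_introl erefl));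
have [e3|e3] := AB U3 (or_intror (or_intror erefl)).
all: first [ apply: Or31; exact: peq_trans e1 (peq_sym e2)
           | apply: Or32; exact: peq_trans e1 (peq_sym e3)
           | apply: Or33; exact: peq_trans e2 (peq_sym e3) ].
Qed.

Lemma is_sup_unique (G : L -> Prop) x y : is_sup G x -> is_sup G y -> x = y.
Proof. by move=> [Gx lex] [Gy ley]; apply/le_anti; rewrite lex // ley. Qed.

Lemma atom_of_peq (V W : L -> Prop) x : peq V W -> atom_of V x -> atom_of W x.
Proof. by move=> VW [Vx x0 minx]; split=> [||b /VW]; [apply/VW | | apply: minx]. Qed.

Section PartitionBSA.
Variables (I : finType) (f : I -> L).

Lemma bsa_of_min (W : L -> Prop) : BSA perp W -> (forall i, W (f i)) ->
  pincl (bsa_of f) W.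
Proof.
move=> [W0 _ _ WIU _] Wf _ [S ->]; apply: big_ind => // x y Wx Wy.
by case: (WIU x y Wx Wy).
Qed.

Lemma is_sup_sjoin (G : L -> Prop) : pincl G (range f) ->
  is_sup G (sjoin f [set i | `[< G (f i) >]]).
Proof.
move=> Gf; split=> [s Gs|y ub].
  by have [i fi] := Gf s Gs; rewrite -fi le_sjoin // inE; apply/asboolP; rewrite fi.
by apply/joinsP => i; rewrite inE => /asboolP; apply: ub.
Qed.

Lemma bsa_of_range (W F : L -> Prop) : generated_by perp W F ->
  (forall x, F x <-> range f x) -> peq W (bsa_of f).
Proof.
move=> [BSAW [_ _ _ Fatom Fsup]] Ff x; split=> [/Fsup[G [GF supG]]|].
  exists [set i | `[< G (f i) >]]; apply: is_sup_unique supG _.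
  by apply: is_sup_sjoin => y /GF /Ff.
apply: bsa_of_min => // i; have [Wfi _ _] : atom_of W (f i) by apply/Fatom/Ff; exists i.
exact: Wfi.
Qed.

Lemma generated_partition (W F : L -> Prop) : generated_by perp W F ->
  injective f -> (forall x, F x <-> range f x) -> ortho_partition f.
Proof.
move=> [_ [F0 Forth [_ Flub] _ _]] finj Ff.
have Ffi i : F (f i) by apply/Ff; exists i.
split=> [i|i j ij|]; first exact: F0.
  by apply: Forth => // /finj eij; rewrite eij eqxx in ij.
by apply/le_anti; rewrite lex1 Flub // => _ /Ff[i <-]; apply: joins_sup.
Qed.

End PartitionBSA.

Lemma bsa_of_eq (I J : finType) (f : I -> L) (g : J -> L) :
  ortho_partition f -> ortho_partition g -> (forall x, range f x <-> range g x) ->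
  peq (bsa_of f) (bsa_of g).
Proof.
move=> pf pg fg x; split; apply: bsa_of_min; try exact: bsa_of_BSA.
  move=> i; have [j <-] : range g (f i) by apply/fg; exists i.
  exact: bsa_of_f.
move=> j; have [i <-] : range f (g j) by apply/fg; exists j.
exact: bsa_of_f.
Qed.

Lemma range_of_peq (I J : finType) (f : I -> L) (g : J -> L) x :
  ortho_partition f -> ortho_partition g -> peq (bsa_of f) (bsa_of g) ->
  range f x -> range g x.
Proof.
move=> pf pg fg; rewrite -(atom_of_bsa_of pf) -(atom_of_bsa_of pg).
exact: atom_of_peq.
Qed.

Lemma has_dim_partition (W : L -> Prop) n : has_dim perp W n ->
  exists f : 'I_n -> L, ortho_partition f /\ peq W (bsa_of f).
Proof.
move=> [F [genW [f [finj Ff]]]]; exists f.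
have Ff' x : F x <-> range f x by rewrite Ff.
by split; [apply: generated_partition genW _ _ | apply: bsa_of_range genW _].
Qed.

(** * Refining a block *)

Section Refinement.
Variables (I : finType) (f : I -> L) (k : I) (b : L).
Hypotheses (partf : ortho_partition f) (bfk : b <= f k).
Hypotheses (b0 : b != \bot) (bNfk : b != f k).

Definition refinement (o : option I) : L :=
  if o is Some i then (if i == k then b else f i) else f k `&` perp b.

Lemma refinement_orthNone i : refinement (Some i) <= perp (refinement None).
Proof.
rewrite /= perpI perpK; case: (eqVneq i k) => [_|ik]; first exact: leUr.
by rewrite (le_trans (partition_orth partf ik)) ?leUl.
Qed.

Lemma refinement_partition : ortho_partition refinement.
Proof.
split=> [[i|]|[i|] [j|] //= ij|] /=.
- by case: (i == k); rewrite ?(partition_neq0 partf).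
- exact: meet_perp_neq0.
- have {}ij : i != j by apply: contra_neq ij => ->.
  case: (eqVneq i k) => [eik|ik]; case: (eqVneq j k) => [ejk|jk].
  + by rewrite eik ejk eqxx in ij.
  + by apply: le_trans bfk _; rewrite -eik partition_orth.
  + by apply: le_trans (partition_orth partf ij) _; rewrite le_perp ejk.
  + exact: partition_orth.
- exact: refinement_orthNone.
- exact/le_perpC/refinement_orthNone.
- apply/le_anti; rewrite lex1 /= -(sjoinT partf); apply/joinsP => i _.
  have fi_le o : refinement o <= \join_o refinement o by apply: joins_sup.
  case: (eqVneq i k) => [->|ik]; last by have := fi_le (Some i); rewrite /= (negbTE ik).
  rewrite (oml_decomp bfk) leUx; have := fi_le (Some k); rewrite /= eqxx => ->.
  exact: fi_le None.
Qed.

Lemma bsa_of_refinement : pincl (bsa_of f) (bsa_of refinement).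
Proof.
apply: bsa_of_min; first exact/bsa_of_BSA/refinement_partition.
move=> i; case: (eqVneq i k) => [->|ik]; last first.
  by have := bsa_of_f refinement (Some i); rewrite /= (negbTE ik).
rewrite (oml_decomp bfk); have [_ _ _ IU _] := bsa_of_BSA refinement_partition.
apply: (IU _ _ _ (bsa_of_f _ None)).2.
by have := bsa_of_f refinement (Some k); rewrite /= eqxx.
Qed.

Lemma refinement_block : bsa_of refinement b.
Proof. by have := bsa_of_f refinement (Some k); rewrite /= eqxx. Qed.

End Refinement.

Lemma maximal_partition_atom (I : finType) (f : I -> L) (W : L -> Prop) k :
  ortho_partition f -> peq W (bsa_of f) -> maximalB perp W -> atom (f k).
Proof.
move=> pf Wf [_ maxW]; apply: contrapT => fkNatom.
have [b [bfk b0 bNfk]] := not_atom (partition_neq0 pf k) fkNatom.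
have pr := refinement_partition pf bfk b0 bNfk.
have /Wf[S bS] : W b.
  apply: maxW (refinement_block f k b); first by exists (range (refinement f k b));
    exact: generated_by_bsa_of pr.
  by move=> x /Wf; apply: bsa_of_refinement.
move: bfk; rewrite bS -(sjoin1 f k) (sjoin_subset pf) subset1 => /orP[]/eqP SE.
  by rewrite bS SE sjoin1 eqxx in bNfk.
by rewrite bS SE sjoin0 eqxx in b0.
Qed.

Lemma partition_has_dim (I : finType) (f : I -> L) : ortho_partition f ->
  has_dim perp (bsa_of f) #|I|.
Proof.
move=> pf; exists (range f); split; first exact: generated_by_bsa_of.
exists (f \o enum_val); split; first exact/inj_comp/enum_val_inj/partition_inj.
move=> x; split=> [[i <-]|[i <-]]; last by exists (enum_val i).
by exists (enum_rank i); rewrite /= enum_rankK.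
Qed.

Section PartitionBlocks.
Variables (I : finType) (f : I -> L).
Hypothesis partf : ortho_partition f.

Lemma perp_block k : perp (f k) = sjoin f (~: [set k]).
Proof. by rewrite -(sjoin1 f k) (sjoinC partf). Qed.

Lemma sjoin2 i j : sjoin f [set i; j] = f i `|` f j.
Proof. by rewrite (sjoinU f) !sjoin1. Qed.

Lemma partition_neq1 i j : i != j -> f i != \top.
Proof.
move=> ij; apply: contraNneq (partition_neq0 partf j) => fi1.
by rewrite -lex0 -perp1 -fi1 partition_orth // eq_sym.
Qed.

Lemma sjoin_block S i : sjoin f S = f i -> S = [set i].
Proof. by rewrite -(sjoin1 f i) => /(sjoin_inj partf). Qed.

Lemma perp_block_card i j : f i = perp (f j) -> #|I| = 2.
Proof.
rewrite perp_block => /esym/sjoin_block eS.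
have I0 : 0 < #|I| by apply/card_gt0P; exists j.
by move: (cardsC1 j); rewrite eS cards1; lia.
Qed.

Lemma atom_block x : bsa_of f x -> atom x -> exists i, x = f i.
Proof.
move=> [S ->] [S0 minS]; have [i iS] : exists i, i \in S.
  by apply/set0Pn; rewrite -(sjoin_eq0 partf).
exists i; case: (minS _ (le_sjoin f iS)) => // fi0.
by move: (partition_neq0 partf i); rewrite fi0 eqxx.
Qed.

End PartitionBlocks.

(** * Partitions into two and three blocks *)

Definition bipartition (p : L) (c : bool) : L := if c then p else perp p.

Lemma range_bipartition p x : range (bipartition p) x <-> x = p \/ x = perp p.
Proof. by split=> [[[] <-]|[->|->]]; [left|right|exists true|exists false]. Qed.

Lemma bipartition_partition p : p != \bot -> p != \top ->
  ortho_partition (bipartition p).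
Proof.
move=> p0 p1; split=> [[]|[] [] //= _|] /=; rewrite ?perp_eq0 ?perpK //.
by rewrite big_bool /= join_perp.
Qed.

Lemma bipartition_min (W : L -> Prop) p : BSA perp W -> W p ->
  pincl (bsa_of (bipartition p)) W.
Proof.
move=> BSAW Wp; apply: bsa_of_min => // -[] //=.
by case: BSAW => _ _ Wperp _ _; apply: Wperp.
Qed.

Lemma bipartition_dim2 p : p != \bot -> p != \top ->
  has_dim perp (bsa_of (bipartition p)) 2.
Proof.
by move=> p0 p1; rewrite -card_bool; apply/partition_has_dim/bipartition_partition.
Qed.

Lemma bipartition_perp p : p != \bot -> p != \top ->
  peq (bsa_of (bipartition (perp p))) (bsa_of (bipartition p)).
Proof.
move=> p0 p1; apply: bsa_of_eq; try exact: bipartition_partition.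
  by apply: bipartition_partition; rewrite ?perp_eq0 ?perp_eq1.
by move=> x; rewrite !range_bipartition perpK; split=> -[]; auto.
Qed.

Lemma dim2_bipartition (U : L -> Prop) : has_dim perp U 2 ->
  exists q, [/\ q != \bot, q != \top & peq U (bsa_of (bipartition q))].
Proof.
move=> /has_dim_partition[g [pg Ug]].
have /cards1P[k Ck] : #|~: [set ord0 : 'I_2]| == 1 by rewrite cardsC1 card_ord.
have perpg0 : perp (g ord0) = g k by rewrite (perp_block pg) Ck sjoin1.
have g01 : g ord0 != \top by rewrite -perp_eq0 perpg0 (partition_neq0 pg).
exists (g ord0); split=> //; first exact: (partition_neq0 pg).
apply: peq_trans Ug (bsa_of_eq pg (bipartition_partition _ _) _) => //.
  exact: (partition_neq0 pg).
move=> x; rewrite range_bipartition perpg0.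
split=> [[i <-]|[->|->]]; try by eexists.
case: (eqVneq i ord0) => [->|i0]; [left | right] => //; congr g.
by apply/set1P; rewrite -Ck !inE.
Qed.

(* Blocks [p] at [Some true], [x] at [Some false], [perp p `&` perp x] at [None]. *)
Definition tripartition (p x : L) := refinement (bipartition p) false x.

Lemma tripartition_partition p x : p != \bot -> p != \top -> x <= perp p ->
  x != \bot -> x != perp p -> ortho_partition (tripartition p x).
Proof. by move=> p0 p1; apply/refinement_partition/bipartition_partition. Qed.

Lemma range_tripartition p x y :
  range (tripartition p x) y <-> [\/ y = p, y = x | y = perp p `&` perp x].
Proof.
split=> [[[[]|] <-]|[->|->|->]]; [exact: Or31 | exact: Or32 | exact: Or33 | | |].
- by exists (Some true).
- by exists (Some false).
- by exists None.
Qed.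

Lemma tripartition_dim3 p x : ortho_partition (tripartition p x) ->
  has_dim perp (bsa_of (tripartition p x)) 3.
Proof. by move/partition_has_dim; rewrite card_option card_bool. Qed.

Lemma tripartition_min (W : L -> Prop) p x : BSA perp W -> W p -> W x ->
  pincl (bsa_of (tripartition p x)) W.
Proof.
move=> BSAW Wp Wx; have [_ _ Wperp WIU _] := BSAW.
by apply: bsa_of_min => // -[[]|] //=; apply: (WIU _ _ (Wperp _ Wp) (Wperp _ Wx)).1.
Qed.

Section Tripartition.
Variables p x : L.
Hypothesis ptri : ortho_partition (tripartition p x).

Lemma tripartition_neq0 : p != \bot.
Proof. exact: (partition_neq0 ptri (Some true)). Qed.

Lemma tripartition_neq1 : p != \top.
Proof. exact: (partition_neq1 ptri (i := Some true) (j := Some false)). Qed.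

Lemma tripartition_le : x <= perp p.
Proof. exact: (partition_orth ptri (i := Some false) (j := Some true)). Qed.

Lemma bipartition_sub_tripartition :
  pincl (bsa_of (bipartition p)) (bsa_of (tripartition p x)).
Proof. exact: (bipartition_min (bsa_of_BSA ptri) (bsa_of_f _ (Some true))). Qed.

Lemma tripartition_compl : x = perp p `&` perp (perp p `&` perp x).
Proof.
by apply: rel_compl_unique; rewrite ?leIr // joinC -oml_decomp ?tripartition_le.
Qed.

Lemma tripartition_swap_partition :
  ortho_partition (tripartition p (perp p `&` perp x)).
Proof.
apply: tripartition_partition; rewrite ?leIl ?tripartition_neq0 ?tripartition_neq1 //.
  exact: (partition_neq0 ptri None).
apply: contraTneq (partition_neq0 ptri (Some false)) => /= e.
by rewrite negbK tripartition_compl e perpK meetC meet_perp.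
Qed.

Lemma tripartition_swap :
  peq (bsa_of (tripartition p x)) (bsa_of (tripartition p (perp p `&` perp x))).
Proof.
apply: bsa_of_eq ptri tripartition_swap_partition _ => y.
rewrite !range_tripartition -tripartition_compl.
by split=> -[] e;
  [exact: Or31 | exact: Or33 | exact: Or32 | exact: Or31 | exact: Or33 | exact: Or32].
Qed.

End Tripartition.

Section Partition3.
Variables (I : finType) (g : I -> L).
Hypotheses (pg : ortho_partition g) (I3 : #|I| = 3).

Lemma partition3_block x : bsa_of g x -> x != \bot -> x != \top ->
  exists k, x = g k \/ perp x = g k.
Proof.
move=> [S ->] S0 S1.
have : #|S| != 0 by rewrite cards_eq0 -(sjoin_eq0 pg).
have : #|~: S| != 0 by rewrite cards_eq0 -(sjoin_eq0 pg) -(sjoinC pg) perp_eq0.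
have := cardsC S; rewrite I3 => cardS cardC0 cardS0.
have /orP[] : (#|S| == 1) || (#|~: S| == 1) by lia.
  by move=> /cards1P[k ->]; exists k; left; rewrite sjoin1.
by move=> /cards1P[k Sk]; exists k; right; rewrite (sjoinC pg) Sk sjoin1.
Qed.

Lemma partition3_neq1 k : g k != \top.
Proof.
have [k1 [_ [_ k1k _ _]]] := card3_setC1 k I3.
by apply: (partition_neq1 pg (j := k1)); rewrite eq_sym.
Qed.

Lemma partition3_tripartition k : exists2 k',
  ortho_partition (tripartition (g k) (g k')) &
  peq (bsa_of g) (bsa_of (tripartition (g k) (g k'))).
Proof.
have [k1 [k2 [k12 k1k k2k Ck]]] := card3_setC1 k I3.
have perpk : perp (g k) = g k1 `|` g k2 by rewrite (perp_block pg) Ck sjoin2.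
have gk2 : g k2 = perp (g k) `&` perp (g k1).
  by apply: rel_compl_unique; rewrite ?partition_orth // perpk.
have ptri : ortho_partition (tripartition (g k) (g k1)).
  apply: tripartition_partition; rewrite ?(partition_neq0 pg) ?partition_orth //.
    exact: partition3_neq1.
  by apply/eqP => /(perp_block_card pg); rewrite I3.
exists k1 => //; apply: bsa_of_eq => // y; rewrite range_tripartition -gk2.
split=> [[i <-]|[->|->|->]]; try by eexists.
case: (eqVneq i k) => [->|/negbTE ik]; first exact: Or31.
have : i \in ~: [set k] by rewrite !inE ik.
by rewrite Ck !inE => /orP[]/eqP->; [exact: Or32 | exact: Or33].
Qed.

Lemma dim2_in_partition3 (U : L -> Prop) : has_dim perp U 2 ->
  pincl U (bsa_of g) -> exists k, peq U (bsa_of (bipartition (g k))).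
Proof.
move=> /dim2_bipartition[q [q0 q1 Uq]] Ug.
have /Ug/partition3_block/(_ q0 q1)[k [qk|qk]] : U q.
  by apply/Uq; exact: (bsa_of_f _ true).
- by exists k; rewrite -qk.
- by exists k; rewrite -qk; apply: peq_trans Uq (peq_sym (bipartition_perp q0 q1)).
Qed.

Lemma bipartition_block_inj i j :
  peq (bsa_of (bipartition (g i))) (bsa_of (bipartition (g j))) -> i = j.
Proof.
move=> ij; have p2 k := bipartition_partition (partition_neq0 pg k) (partition3_neq1 k).
have /range_bipartition[/(partition_inj pg)//|/(perp_block_card pg)] :
    range (bipartition (g j)) (g i).
  by apply: range_of_peq ij _; [exact: p2 | exact: p2 | exists true].
by rewrite I3.
Qed.

End Partition3.

(** * Maximal subalgebras *)

Lemma dim2_maximal_atoms (V : L -> Prop) P : peq V (bsa_of (bipartition P)) ->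
  P != \bot -> P != \top -> maximalB perp V -> atom P /\ atom (perp P).
Proof.
move=> hV P0 P1 mV; have pb := bipartition_partition P0 P1.
by split; [exact: (maximal_partition_atom true pb hV mV)
          | exact: (maximal_partition_atom false pb hV mV)].
Qed.

Lemma dim3_maximal_over_dim2 (V W : L -> Prop) P : peq V (bsa_of (bipartition P)) ->
  P != \bot -> P != \top -> has_dim perp W 3 -> maximalB perp W -> pincl V W ->
  ((atom P /\ exists a b, [/\ atom a, atom b, a <> b & perp P = a `|` b]) \/
   (atom (perp P) /\ exists a b, [/\ atom a, atom b, a <> b & P = a `|` b])) /\
  (exists U1 U2 : L -> Prop,
     [/\ ~ peq U1 U2,
         (has_dim perp U1 2 /\ pincl U1 W /\ ~ peq U1 V),
         (has_dim perp U2 2 /\ pincl U2 W /\ ~ peq U2 V)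
       & forall U, has_dim perp U 2 -> pincl U W -> ~ peq U V ->
           peq U U1 \/ peq U U2]).
Proof.
move=> hV P0 P1 /has_dim_partition[g [pg Wg]] mW VW; have I3 := card_ord 3.
have atom_g j : atom (g j) := maximal_partition_atom j pg Wg mW.
have /Wg WP : W P by apply/VW/hV; exact: (bsa_of_f _ true).
have [k Pk] := partition3_block pg I3 WP P0 P1.
have Vk : peq V (bsa_of (bipartition (g k))).
  by case: Pk => <- //; apply: peq_trans hV (peq_sym (bipartition_perp P0 P1)).
have [k1 [k2 [k12 k1k k2k Ck]]] := card3_setC1 k I3.
have perpk : perp (g k) = g k1 `|` g k2 by rewrite (perp_block pg) Ck sjoin2.
have g12 : g k1 <> g k2 by move/(partition_inj pg)/eqP; rewrite (negbTE k12).
split.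
  case: Pk => Pk; [left | right]; rewrite Pk; split; try exact: atom_g.
    by exists (g k1), (g k2); split; try exact: atom_g.
  by exists (g k1), (g k2); split; try exact: atom_g; rewrite // -perpk -Pk perpK.
have Uprops j : j != k -> [/\ has_dim perp (bsa_of (bipartition (g j))) 2,
    pincl (bsa_of (bipartition (g j))) W & ~ peq (bsa_of (bipartition (g j))) V].
  move=> jk; split.
  - exact: bipartition_dim2 (partition_neq0 pg j) (partition3_neq1 pg I3 j).
  - by move=> x /(bipartition_min (bsa_of_BSA pg) (bsa_of_f g j))/Wg.
  - by move=> e; move: jk; rewrite (bipartition_block_inj pg I3 (peq_trans e Vk)) eqxx.
exists (bsa_of (bipartition (g k1))), (bsa_of (bipartition (g k2))).
have [U11 U12 U13] := Uprops k1 k1k; have [U21 U22 U23] := Uprops k2 k2k.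
split=> // [/(bipartition_block_inj pg I3)/eqP|U U2 UW nUV]; first exact/negP.
have [j Uj] := dim2_in_partition3 pg I3 U2 (fun x Ux => (Wg x).1 (UW x Ux)).
case: (eqVneq j k) => [jk|].
  by case: nUV; rewrite jk in Uj; exact: peq_trans Uj (peq_sym Vk).
by rewrite -in_setC1 Ck !inE => /orP[]/eqP jk; [left | right]; rewrite -jk.
Qed.

(** * Three-block subalgebras of a four-block partition *)

Lemma dim3_tripartition (U : L -> Prop) q : has_dim perp U 3 -> U q ->
  q != \bot -> q != \top -> exists p x,
  [/\ p = q \/ p = perp q, ortho_partition (tripartition p x), U x
    & peq U (bsa_of (tripartition p x))].
Proof.
move=> /has_dim_partition[g [pg Ug]] /Ug Uq q0 q1.
have I3 : #|'I_3| = 3 by rewrite card_ord.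
have [k qk] := partition3_block pg I3 Uq q0 q1.
have [k' ptri gtri] := partition3_tripartition pg I3 k.
exists (g k), (g k'); split=> //; last exact: peq_trans Ug gtri.
- by case: qk => ->; [left | right].
- by apply/Ug; exact: bsa_of_f.
Qed.

Lemma dim3_tripartition_atom (U : L -> Prop) q : has_dim perp U 3 -> U q ->
  atom q -> exists x,
  [/\ ortho_partition (tripartition q x), U x & peq U (bsa_of (tripartition q x))].
Proof.
move=> /has_dim_partition[g [pg Ug]] /Ug Uq aq.
have [k ->] := atom_block pg Uq aq.
have [k' ptri gtri] := partition3_tripartition pg (card_ord 3) k.
exists (g k'); split=> //; last exact: peq_trans Ug gtri.
by apply/Ug; exact: bsa_of_f.
Qed.

Section TripartitionRefines.
Variables (I : finType) (f : I -> L) (p x : L).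
Hypotheses (pf : ortho_partition f) (ptri : ortho_partition (tripartition p x)).
Hypothesis fx : bsa_of f x.

(* [x] and [perp p `&` perp x] split the blocks of [f] below [perp p] into two
   nonempty parts; with at most three such blocks, one part is a single block. *)
Lemma tripartition_refines (C : {set I}) : perp p = sjoin f C -> #|C| <= 3 ->
  exists j, [/\ j \in C, ortho_partition (tripartition p (f j))
    & peq (bsa_of (tripartition p x)) (bsa_of (tripartition p (f j)))].
Proof.
move=> pC C3; have [T xT] := fx.
have TC : T \subset C by rewrite -(sjoin_subset pf) -xT -pC tripartition_le.
have T0 : #|T| != 0.
  by rewrite cards_eq0 -(sjoin_eq0 pf) -xT (partition_neq0 ptri (Some false)).
have rest : perp p `&` perp x = sjoin f (C :\: T).
  by rewrite pC xT (sjoinC pf) -(sjoinI pf) setDE.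
have D0 : #|C :\: T| != 0.
  by rewrite cards_eq0 -(sjoin_eq0 pf) -rest (partition_neq0 ptri None).
have := cardsDS TC; have := subset_leq_card TC => TCle cardD.
have /orP[] : (#|T| == 1) || (#|C :\: T| == 1) by lia.
  move=> /cards1P[j Tj]; exists j; have xj : x = f j by rewrite xT Tj sjoin1.
  by rewrite -xj (subsetP TC) // Tj set11.
move=> /cards1P[j Dj]; exists j; rewrite -(sjoin1 f j) -Dj -rest.
split; [| exact: tripartition_swap_partition | exact: tripartition_swap].
by have := set11 j; rewrite -Dj !inE => /andP[].
Qed.

Lemma tripartition_refines2 j1 j2 : j1 != j2 -> perp p = f j1 `|` f j2 ->
  peq (bsa_of (tripartition p x)) (bsa_of (tripartition p (f j1))).
Proof.
move=> j12 pj; have pC : perp p = sjoin f [set j1; j2] by rewrite sjoin2.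
have C2 : #|[set j1; j2]| <= 3 by rewrite cards2 j12.
have [j [jC ptrij xj]] := tripartition_refines pC C2.
apply: peq_trans xj _; move: jC ptrij; rewrite !inE => /orP[]/eqP-> ptrij.
  exact: peq_refl.
have -> : f j1 = perp p `&` perp (f j2).
  by apply: rel_compl_unique; rewrite ?partition_orth // 1?eq_sym // joinC.
exact: tripartition_swap ptrij.
Qed.

End TripartitionRefines.

Section BlockTripartitions.
Variables (I : finType) (f : I -> L) (i0 : I).
Hypotheses (pf : ortho_partition f) (I4 : #|I| = 4).

Lemma block_tripartition_partition j : j != i0 ->
  ortho_partition (tripartition (f i0) (f j)).
Proof.
move=> ji0; apply: tripartition_partition;
  rewrite ?(partition_neq0 pf) ?partition_orth //.
  by apply: (partition_neq1 pf (j := j)); rewrite eq_sym.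
by apply/eqP => /(perp_block_card pf); rewrite I4.
Qed.

Lemma block_tripartition_sub j :
  pincl (bsa_of (tripartition (f i0) (f j))) (bsa_of f).
Proof. exact: tripartition_min (bsa_of_BSA pf) (bsa_of_f f i0) (bsa_of_f f j). Qed.

Lemma bipartition_neq_block_tripartition j : j != i0 ->
  ~ peq (bsa_of (bipartition (f i0))) (bsa_of (tripartition (f i0) (f j))).
Proof.
move=> ji0 e; have pbi : ortho_partition (bipartition (f i0)).
  apply: bipartition_partition (partition_neq0 pf i0) _.
  by apply: (partition_neq1 pf (j := j)); rewrite eq_sym.
have : range (bipartition (f i0)) (f j).
  apply: range_of_peq (peq_sym e) _; [exact: block_tripartition_partition | done |].
  by exists (Some false).
case/range_bipartition => [/(partition_inj pf) eji0|/(perp_block_card pf)].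
  by rewrite eji0 eqxx in ji0.
by rewrite I4.
Qed.

Lemma block_tripartition_inj j j' : j != i0 -> j' != i0 ->
  peq (bsa_of (tripartition (f i0) (f j))) (bsa_of (tripartition (f i0) (f j'))) ->
  j = j'.
Proof.
move=> ji0 j'i0 e.
have : range (tripartition (f i0) (f j')) (f j).
  apply: range_of_peq e _; try exact: block_tripartition_partition.
  by exists (Some false).
case/range_tripartition => [/(partition_inj pf) eji0|/(partition_inj pf) //|].
  by rewrite eji0 eqxx in ji0.
rewrite !(perp_block pf) -(sjoinI pf) -setCU => /esym/(sjoin_block pf) eS.
by have := cardsC [set i0; j']; rewrite eS cards1 cards2 eq_sym j'i0 I4.
Qed.

Lemma block_tripartition_classify (U : L -> Prop) : atom (f i0) ->
  has_dim perp U 3 -> U (f i0) -> pincl U (bsa_of f) ->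
  exists2 j, j != i0 & peq U (bsa_of (tripartition (f i0) (f j))).
Proof.
move=> aP U3 UP Uf; have [x [ptri Ux Utri]] := dim3_tripartition_atom U3 UP aP.
have C3 : #|~: [set i0]| <= 3 by rewrite cardsC1 I4.
have [j [ji0 _ e]] := tripartition_refines pf ptri (Uf x Ux) (perp_block pf i0) C3.
by exists j; [rewrite !inE in ji0 | exact: peq_trans Utri e].
Qed.

End BlockTripartitions.

Definition three_dim3_between (V W : L -> Prop) : Prop :=
  exists U1 U2 U3 : L -> Prop,
    [/\ ~ peq U1 U2 /\ ~ peq U1 U3 /\ ~ peq U2 U3,
        (forall U, U = U1 \/ U = U2 \/ U = U3 ->
           has_dim perp U 3 /\ pincl V U /\ ~ peq V U /\ pincl U W)
      & forall U, has_dim perp U 3 -> pincl V U -> ~ peq V U -> pincl U W ->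
          peq U U1 \/ peq U U2 \/ peq U U3].

Lemma atom_three_dim3_between (V W : L -> Prop) P :
  peq V (bsa_of (bipartition P)) -> atom P -> has_dim perp W 4 -> pincl V W ->
  three_dim3_between V W.
Proof.
move=> hV aP /has_dim_partition[f [pf Wf]] VW; have I4 := card_ord 4.
have /Wf WP : W P by apply/VW/hV; exact: (bsa_of_f _ true).
have [i0 Pi0] := atom_block pf WP aP; rewrite {}Pi0 in hV aP.
have C3 : #|~: [set i0]| = 3 by rewrite cardsC1 I4.
have [j1 [j2 [j3 [j12 j13 j23 Ci0]]]] := card3_set C3.
pose U j := bsa_of (tripartition (f i0) (f j)).
have Uinj j j' : j \in ~: [set i0] -> j' \in ~: [set i0] -> j != j' -> ~ peq (U j) (U j').
  rewrite !inE => ji0 j'i0 jj'.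
  by move/(block_tripartition_inj pf I4 ji0 j'i0)/eqP; apply/negP.
have [C1 C2 C3'] : [/\ j1 \in ~: [set i0], j2 \in ~: [set i0] & j3 \in ~: [set i0]].
  by rewrite Ci0 !inE !eqxx ?orbT.
have Uprops j : j \in ~: [set i0] ->
    has_dim perp (U j) 3 /\ pincl V (U j) /\ ~ peq V (U j) /\ pincl (U j) W.
  rewrite !inE => ji0; have ptri := block_tripartition_partition pf I4 ji0.
  split; [exact: tripartition_dim3 | split; [|split]].
  - by move=> x /hV; apply: bipartition_sub_tripartition.
  - move=> e; apply: (bipartition_neq_block_tripartition pf I4 ji0).
    exact: peq_trans (peq_sym hV) e.
  - by move=> x /(block_tripartition_sub pf)/Wf.
exists (U j1), (U j2), (U j3); split.
- by split; [|split]; apply: Uinj.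
- by move=> _ [->|[->|->]]; apply: Uprops.
- move=> U' U3 VU _ UW; have UP : U' (f i0) by apply/VU/hV; exact: (bsa_of_f _ true).
  have Uf : pincl U' (bsa_of f) by move=> x /UW/Wf.
  have [j ji0 Uj] := block_tripartition_classify pf I4 aP U3 UP Uf.
  have : j \in [set j1; j2; j3] by rewrite -Ci0 !inE.
  by rewrite !inE => /orP[/orP[]|]/eqP jE; rewrite -jE; auto.
Qed.

Lemma nonatom_dim4_two_dim3 P : P != \bot -> P != \top ->
  ~ atom P -> ~ atom (perp P) ->
  exists W, [/\ has_dim perp W 4, pincl (bsa_of (bipartition P)) W &
    exists A B, forall U, has_dim perp U 3 -> pincl (bsa_of (bipartition P)) U ->
      pincl U W -> peq U A \/ peq U B].
Proof.
move=> P0 P1 naP naP'; have pb := bipartition_partition P0 P1.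
have [a [aP a0 aNP]] := not_atom P0 naP.
have P'0 : perp P != \bot by rewrite perp_eq0.
have [c [cP c0 cNP]] := not_atom P'0 naP'.
have pf1 := refinement_partition (k := true) pb aP a0 aNP.
set f1 := refinement _ _ _ in pf1.
have pf := refinement_partition (k := Some false) pf1 cP c0 cNP.
set f := refinement _ _ _ in pf.
exists (bsa_of f); split.
- by have := partition_has_dim pf; rewrite !card_option card_bool.
- move=> x /(bsa_of_refinement (k := true) pb aP a0 aNP).
  exact: (bsa_of_refinement (k := Some false) pf1 cP c0 cNP).
exists (bsa_of (tripartition P c)), (bsa_of (tripartition (perp P) a)) => U U3 VU Uf.
have VP : U P by apply: VU; exact: (bsa_of_f _ true).
have [p [x [[->|->] ptri Ux Utri]]] := dim3_tripartition U3 VP P0 P1.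
- left; apply: peq_trans Utri _.
  apply: (tripartition_refines2 pf ptri (Uf x Ux) (j1 := Some (Some false))
           (j2 := None)) => //.
  exact: oml_decomp cP.
- right; apply: peq_trans Utri _.
  apply: (tripartition_refines2 pf ptri (Uf x Ux) (j1 := Some (Some true))
           (j2 := Some None)) => //.
  by rewrite perpK; exact: oml_decomp aP.
Qed.

Lemma three_dim3_between_atom (V : L -> Prop) P : peq V (bsa_of (bipartition P)) ->
  P != \bot -> P != \top ->
  (forall W, has_dim perp W 4 -> pincl V W -> three_dim3_between V W) ->
  atom P \/ atom (perp P).
Proof.
move=> hV P0 P1 three; apply: contrapT => /not_orP[naP naP'].
have [W [W4 VW [A [B AB]]]] := nonatom_dim4_two_dim3 P0 P1 naP naP'.
have VW' : pincl V W by move=> x /hV; apply: VW.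
have [U1 [U2 [U3 [[n12 [n13 n23]] Uprops _]]]] := three W W4 VW'.
have AB3 U : U = U1 \/ U = U2 \/ U = U3 -> peq U A \/ peq U B.
  move=> /Uprops[dimU [VU [_ UW]]]; apply: AB dimU _ UW => x /hV; exact: VU.
by case: (peq_pigeonhole AB3) => e; [exact: n12 e | exact: n13 e | exact: n23 e].
Qed.

End OrthomodularLattice.

Theorem lemma3p2 (d : Order.disp_t) (L : tbLatticeType d) (perp : L -> L)
  (HOML : orthomodular perp) (Hatomic : atomic (L := L))
  (V : L -> Prop) (P : L)
  (HV : generated_by perp V (fun x => x = P \/ x = perp P)) :
  (* (i) *)
  (maximalB perp V -> atom P /\ atom (perp P)) /\
  (* (ii) *)
  (forall W : L -> Prop, has_dim perp W 3 -> maximalB perp W -> pincl V W ->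
     ((atom P /\ exists a b, [/\ atom a, atom b, a <> b & perp P = a `|` b]) \/
      (atom (perp P) /\ exists a b, [/\ atom a, atom b, a <> b & P = a `|` b])) /\
     (exists U1 U2 : L -> Prop,
        [/\ ~ peq U1 U2,
            (has_dim perp U1 2 /\ pincl U1 W /\ ~ peq U1 V),
            (has_dim perp U2 2 /\ pincl U2 W /\ ~ peq U2 V)
          & forall U, has_dim perp U 2 -> pincl U W -> ~ peq U V ->
              peq U U1 \/ peq U U2])) /\
  (* (iii) *)
  (~ maximalB perp V ->
   ~ (exists W, [/\ has_dim perp W 3, maximalB perp W & pincl V W]) ->
   ((atom P \/ atom (perp P)) <->
    (forall W : L -> Prop, has_dim perp W 4 -> pincl V W ->
       exists U1 U2 U3 : L -> Prop,
         [/\ ~ peq U1 U2 /\ ~ peq U1 U3 /\ ~ peq U2 U3,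
             (forall U, U = U1 \/ U = U2 \/ U = U3 ->
                has_dim perp U 3 /\ pincl V U /\ ~ peq V U /\ pincl U W)
           & forall U, has_dim perp U 3 -> pincl V U -> ~ peq V U ->
               pincl U W ->
               peq U U1 \/ peq U U2 \/ peq U U3]))).
Proof.
have [_ [F0 _ _ _ _]] := HV.
have P0 : P != \bot := F0 P (or_introl erefl).
have P1 : P != \top by rewrite -(perp_eq0 HOML); exact: F0 _ (or_intror erefl).
have hV : peq V (bsa_of (bipartition perp P)).
  exact: bsa_of_range HV (fun x => iff_sym (range_bipartition perp P x)).
have hV' : peq V (bsa_of (bipartition perp (perp P))).
  exact: peq_trans hV (peq_sym (bipartition_perp HOML P0 P1)).
split; first exact: dim2_maximal_atoms hV P0 P1.
split; first by move=> W; exact: dim3_maximal_over_dim2 hV P0 P1.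
move=> _ _; split; last exact: three_dim3_between_atom hV P0 P1.
by case=> aP W; [exact: atom_three_dim3_between hV aP
               | exact: atom_three_dim3_between hV' aP].
Qed.
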